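(* Let $(\mathcal{G}(u_0,v_0),-\Omega^2\,du\,dv)$ with radial function $r$ and stress-energy components $T_{uu},T_{uv},T_{vv}$ be as described in the context, satisfying assumptions (I)–(VII). Suppose there exists $\delta>0$ such that, with $\mathcal{W}=\mathcal{W}(\delta)$, condition (A), namely $T_{uv}\Omega^{-2}<\frac{1}{4r^2}$, holds at every point of $\mathcal{A}\cap\mathcal{W}$. If $\mathcal{G}(u_0,v_0)$ does not contain a marginally trapped tube which is asymptotic to the event horizon, then $\mathcal{W}\cap\mathcal{R}$ contains a rectangle $K(u_1,v_1)=[0,u_1]\times[v_1,\infty)$ for some $u_1\in(0,u_0]$, $v_1\in[v_0,\infty)$.
   Context: Fix double null coordinates $(u,v)$ on $\mathbb{R}^2$ with Minkowski metric $-du\,dv$, time-oriented so that $u$ and $v$ increase toward the future. For $u,v>0$ let $K(u,v)=[0,u]\times[v,\infty)$. Fix $u_0,v_0>0$, $\mathcal{C}_{in}=[0,u_0]\times\{v_0\}$, $\mathcal{C}_{out}=\{0\}\times[v_0,\infty)$; causal notions $J^\pm,I^\pm$ refer to $K(u_0,v_0)$. Let $\mathcal{G}(u_0,v_0)\subset K(u_0,v_0)$ be a globally hyperbolic, relatively open subset containing $\mathcal{C}_{in}\cup\mathcal{C}_{out}$, with metric $-\Omega^2du\,dv$ ($\Omega>0$ smooth), smooth radial function $r\ge0$ with $r>0$ on $\mathcal{C}_{in}\cup\mathcal{C}_{out}$, and smooth functions $T_{uu},T_{uv},T_{vv}$ (components of the stress-energy tensor of the spherically symmetric spacetime $-\Omega^2du\,dv+r^2g_{S^2}$)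 such that $\partial_u(\Omega^{-2}\partial_u r)=-r\Omega^{-2}T_{uu}$, $\partial_v(\Omega^{-2}\partial_v r)=-r\Omega^{-2}T_{vv}$, $\partial_u m=2r^2\Omega^{-2}(T_{uv}\partial_u r-T_{uu}\partial_v r)$, $\partial_v m=2r^2\Omega^{-2}(T_{uv}\partial_v r-T_{vv}\partial_u r)$, with Hawking mass $m=\frac r2(1+4\Omega^{-2}\partial_u r\partial_v r)$. Define $\mathcal{R}=\{\partial_v r>0,\partial_u r<0\}$, $\mathcal{T}=\{\partial_v r<0,\partial_u r<0\}$, $\mathcal{A}=\{\partial_v r=0,\partial_u r<0\}$ (the marginally trapped tube), $r_+=\sup_{\mathcal{C}_{out}}r$, $m_+=\sup_{\mathcal{C}_{out}}m$, and for $\delta>0$, $\mathcal{W}(\delta)=\{(u,v)\in\mathcal{G}(u_0,v_0): r(u,v)\ge r_+-\delta\}$. Assumptions: (I) $T_{uu},T_{uv},T_{vv}\ge0$; (II) $J^-(\mathcal{G}(u_0,v_0))\subset\mathcal{G}(u_0,v_0)$; (III) $r\le r_+<\infty$ along $\mathcal{C}_{out}$; (IV) $0\le m\le m_+<\infty$ along $\mathcal{C}_{out}$; (V) $\partial_u r<0$ along $\mathcal{C}_{out}$; (VI) $\partial_v r>0$ along $\mathcal{C}_{out}$; (VII) (closures in $K(u_0,v_0)$) if $p\in\overline{\mathcal{R}}$, $q\in\overline{\mathcal{R}}\cap I^-(p)$ and $J^-(p)\cap J^+(q)\setminus\{p\}\subset\mathcal{R}\cup\mathcal{A}$, then $p\in\mathcal{R}\cup\mathcal{A}$.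 The curve $\mathcal{C}_{out}$ is regarded as the event horizon, and $i^+$ denotes the point $(0,\infty)$ of $\overline{K}(u_0,v_0)=[0,u_0]\times[v_0,\infty]$. A marginally trapped tube (portion of $\mathcal{A}$) is asymptotic to the event horizon if it has $i^+$ as a limit point in $\overline{K}(u_0,v_0)$, i.e. for every sufficiently small $u>0$ there is $v>v_0$ with $(u,v)$ in it. *)

From Stdlib Require Import Reals List.
From Coquelicot Require Import Coquelicot.
Open Scope R_scope.

Definition pset := R -> R -> Prop.

Definition du (f : R -> R -> R) : R -> R -> R :=
  fun u v => Derive (fun x => f x v) u.
Definition dv (f : R -> R -> R) : R -> R -> R :=
  fun u v => Derive (fun y => f u y) v.

Fixpoint iter_partial (l : list bool) (f : R -> R -> R) : R -> R -> R :=
  match l with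
  | nil => f
  | b :: l' => (if b then du else dv) (iter_partial l' f)
  end.

Definition cont2 (f : R -> R -> R) (u v : R) : Prop :=
  forall eps, 0 < eps -> exists d, 0 < d /\
    forall u' v', Rabs (u' - u) < d -> Rabs (v' - v) < d ->
      Rabs (f u' v' - f u v) < eps.

Definition open2 (U : pset) : Prop :=
  forall u v, U u v -> exists e, 0 < e /\
    forall u' v', Rabs (u' - u) < e -> Rabs (v' - v) < e -> U u' v'.

Definition smooth_on (U : pset) (f : R -> R -> R) : Prop :=
  forall (l : list bool) u v, U u v ->
    ex_derive (fun x => iter_partial l f x v) u /\
    ex_derive (fun y => iter_partial l f u y) v /\
    cont2 (iter_partial l f) u v.

Definition K (u1 v1 : R) : pset := fun u v => 0 <= u <= u1 /\ v1 <= v.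

(* Causal past / future and chronological past inside K(u0,v0), for the
   time orientation in which u and v increase to the future. *)
Definition Jminus (u0 v0 pu pv : R) : pset :=
  fun u v => K u0 v0 u v /\ u <= pu /\ v <= pv.
Definition Jplus (u0 v0 pu pv : R) : pset :=
  fun u v => K u0 v0 u v /\ pu <= u /\ pv <= v.
Definition Iminus (u0 v0 pu pv : R) : pset :=
  fun u v => K u0 v0 u v /\ u < pu /\ v < pv.

Definition closureK (u0 v0 : R) (S : pset) : pset :=
  fun u v => K u0 v0 u v /\ forall eps, 0 < eps ->
    exists u' v', S u' v' /\ Rabs (u' - u) < eps /\ Rabs (v' - v) < eps.

Definition rel_open_K (u0 v0 : R) (G : pset) : Prop :=
  exists U, open2 U /\ forall u v, G u v <-> (U u v /\ K u0 v0 u v).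

(* Global hyperbolicity of G (with the conformally flat 2d metric
   -Omega^2 du dv, causal curves are the curves along which u and v are
   nondecreasing): every causal diamond J^+(q) \cap J^-(p), p,q in G, is
   contained in G (it is then the compact coordinate rectangle
   [q_u,p_u] x [q_v,p_v]); strong causality is automatic. *)
Definition glob_hyp (u0 v0 : R) (G : pset) : Prop :=
  forall pu pv qu qv, G pu pv -> G qu qv ->
    forall u v, Jplus u0 v0 qu qv u v -> Jminus u0 v0 pu pv u v -> G u v.

Definition hawking_mass (Om r : R -> R -> R) : R -> R -> R :=
  fun u v => r u v / 2 * (1 + 4 * / (Om u v ^ 2) * du r u v * dv r u v).

Definition regR (G : pset) (r : R -> R -> R) : pset :=
  fun u v => G u v /\ dv r u v > 0 /\ du r u v < 0.
Definition trapT (G : pset) (r : R -> R -> R) : pset :=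
  fun u v => G u v /\ dv r u v < 0 /\ du r u v < 0.
Definition mttA (G : pset) (r : R -> R -> R) : pset :=
  fun u v => G u v /\ dv r u v = 0 /\ du r u v < 0.

Definition Wset (G : pset) (r : R -> R -> R) (rplus delta : R) : pset :=
  fun u v => G u v /\ r u v >= rplus - delta.

(* A set S has i^+ = (0,oo) as a limit point, in the sense of the paper:
   for every sufficiently small u > 0 there is v > v0 with (u,v) in S. *)
Definition asymptotic_to_horizon (v0 : R) (S : pset) : Prop :=
  exists ustar, 0 < ustar /\ forall u, 0 < u < ustar -> exists v, v > v0 /\ S u v.

From Stdlib Require Import Reals Lra Classical.
From Coquelicot Require Import Coquelicot.
Open Scope R_scope.

(* By (I) and the Raychaudhuri equation in u, Om^-2 d_u r is nonincreasing in u, so d_u r < 0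
   throughout G.  At a point of A ∩ W the mass equation with d_v r = 0 and condition (A) force
   d_u d_v r < 0, so along an ingoing segment inside W on which d_v r > 0 at the far end, d_v r
   can only cross zero downwards and hence stays positive.
   Pick v1 with r(0,v1) > r_+ - delta and, since no marginally trapped tube is asymptotic to the
   horizon, u1 > 0 so small that (u1,v1) ∈ W ∩ R while the outgoing ray u = u1 misses A.  Real
   induction along this ray gives d_v r(u1,.) > 0 for all v >= v1: openness of G propagates the
   property, and at a first failure the ray either leaves G, which (VII) forbids at the first
   boundary point since its causal diamond is regular, or meets A, which the choice of u1 forbids.
   Monotonicity of r in u and v keeps [0,u1] x [v1,oo) in W, and the segment argument puts it in R. *)

Lemma continuous_eps_delta (f : R -> R) x :
  continuous f x -> forall eps, 0 < eps ->
  exists d, 0 < d /\ forall y, Rabs (y - x) < d -> Rabs (f y - f x) < eps.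
Proof.
  intros Hf eps Heps.
  destruct (proj1 (filterlim_locally f (f x)) Hf (mkposreal eps Heps)) as [d Hd].
  exists d; split; [apply cond_pos | exact Hd].
Qed.

Lemma continuous_pos_near (f : R -> R) x :
  continuous f x -> 0 < f x -> exists d, 0 < d /\ forall y, Rabs (y - x) < d -> 0 < f y.
Proof.
  intros Hf Hx.
  destruct (continuous_eps_delta f x Hf (f x) Hx) as [d [Hd Hnear]].
  exists d; split; [exact Hd|].
  intros y Hy; specialize (Hnear y Hy); apply Rabs_def2 in Hnear; lra.
Qed.

Lemma exists_left_near a t e : a < t -> 0 < e -> exists y, a <= y < t /\ t - e < y.
Proof.
  intros Hat He; exists (Rmax a (t - e / 2)).
  unfold Rmax; destruct Rle_dec; lra.
Qed.

Lemma exists_right_near t b e : t < b -> 0 < e -> exists y, t < y <= b /\ y < t + e.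
Proof.
  intros Htb He; exists (Rmin b (t + e / 2)).
  unfold Rmin; destruct Rle_dec; lra.
Qed.

Lemma continuous_nonneg_left (f : R -> R) a t : a < t -> continuous f t ->
  (forall y, a <= y < t -> 0 < f y) -> 0 <= f t.
Proof.
  intros Hat Hf Hpos; apply Rnot_lt_le; intro Hneg.
  destruct (continuous_eps_delta f t Hf (- f t) ltac:(lra)) as [d [Hd Hnear]].
  destruct (exists_left_near a t d Hat Hd) as [y [Hy Hyt]].
  assert (Hfy := Hnear y ltac:(apply Rabs_def1; lra)).
  apply Rabs_def2 in Hfy; specialize (Hpos y Hy); lra.
Qed.

Lemma continuous_nonneg_right (f : R -> R) t b : t < b -> continuous f t ->
  (forall y, t < y <= b -> 0 < f y) -> 0 <= f t.
Proof.
  intros Htb Hf Hpos; apply Rnot_lt_le; intro Hneg.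
  destruct (continuous_eps_delta f t Hf (- f t) ltac:(lra)) as [d [Hd Hnear]].
  destruct (exists_right_near t b d Htb Hd) as [y [Hy Hyt]].
  assert (Hfy := Hnear y ltac:(apply Rabs_def1; lra)).
  apply Rabs_def2 in Hfy; specialize (Hpos y Hy); lra.
Qed.

Lemma Derive_neg_right_lt (f : R -> R) z : ex_derive f z -> Derive f z < 0 ->
  exists h0, 0 < h0 /\ forall h, 0 < h < h0 -> f (z + h) < f z.
Proof.
  intros Hf Hneg.
  apply Derive_correct, is_derive_Reals in Hf.
  destruct (Hf (- Derive f z) ltac:(lra)) as [d Hquot].
  exists d; split; [apply cond_pos|]; intros h Hh.
  assert (Hq := Hquot h ltac:(lra) ltac:(apply Rabs_def1; lra)).
  apply Rabs_def2 in Hq.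
  assert (Hslope : (f (z + h) - f z) / h < 0) by lra.
  apply Rmult_lt_compat_r with (r := h) in Hslope; [|lra].
  unfold Rdiv in Hslope; rewrite Rmult_assoc, Rinv_l, Rmult_1_r in Hslope; lra.
Qed.

Lemma real_induction (P : R -> Prop) a b :
  P a ->
  (forall t, a <= t < b -> P t ->
     exists e, 0 < e /\ forall s, t <= s <= b -> s < t + e -> P s) ->
  (forall t, a < t <= b -> (forall s, a <= s < t -> P s) -> P t) ->
  forall t, a <= t <= b -> P t.
Proof.
  intros Pa Hopen Hclosed.
  destruct (Rlt_or_le b a) as [Hba | Hab]; [intros t Ht; lra|].
  set (S x := a <= x <= b /\ forall s, a <= s <= x -> P s).
  destruct (completeness S) as [c [Hub Hlub]].
  - exists b; intros x [Hx _]; lra.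
  - exists a; split; [lra|]; intros s Hs; replace s with a by lra; exact Pa.
  - assert (Hac : a <= c) by (apply Hub; split; [lra|]; intros s Hs; replace s with a by lra; exact Pa).
    assert (Hcb : c <= b) by (apply Hlub; intros x [Hx _]; lra).
    assert (Hbelow : forall s, a <= s < c -> P s).
    { intros s Hs; apply NNPP; intro nPs.
      assert (c <= s); [|lra].
      apply Hlub; intros x [Hx Px]; apply Rnot_lt_le; intro Hsx; apply nPs, Px; lra. }
    assert (Pc : P c).
    { destruct (Rle_lt_or_eq_dec a c Hac) as [Hlt | <-]; [apply Hclosed; [lra|exact Hbelow] | exact Pa]. }
    assert (Hc_eq_b : c = b).
    { destruct (Rle_lt_or_eq_dec c b Hcb) as [Hlt | Heq]; [exfalso | exact Heq].
      destruct (Hopen c (conj Hac Hlt) Pc) as [e [He Hnext]].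
      destruct (exists_right_near c b e Hlt He) as [x [Hx Hxe]].
      assert (x <= c); [|lra].
      apply Hub; split; [lra|]; intros s Hs.
      destruct (Rlt_or_le s c) as [Hsc | Hcs]; [apply Hbelow; lra|].
      apply Hnext; lra. }
    intros t Ht; destruct (Rlt_or_le t c) as [Htc | Hct]; [apply Hbelow; lra|].
    replace t with c by lra; exact Pc.
Qed.

Lemma real_induction_down (P : R -> Prop) a b :
  P b ->
  (forall t, a < t <= b -> P t ->
     exists e, 0 < e /\ forall s, a <= s <= t -> t - e < s -> P s) ->
  (forall t, a <= t < b -> (forall s, t < s <= b -> P s) -> P t) ->
  forall t, a <= t <= b -> P t.
Proof.
  intros Pb Hopen Hclosed t Ht.
  replace t with (a + b - (a + b - t)) by ring.
  apply (real_induction (fun x => P (a + b - x)) a b); [| | |lra].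
  - replace (a + b - a) with b by ring; exact Pb.
  - intros x Hx Px; destruct (Hopen (a + b - x) ltac:(lra) Px) as [e [He Hnext]].
    exists e; split; [exact He|]; intros s Hs Hse; apply Hnext; lra.
  - intros x Hx Hbelow; apply Hclosed; [lra|]; intros s Hs.
    replace s with (a + b - (a + b - s)) by ring; apply Hbelow; lra.
Qed.

Lemma pos_of_Derive_neg_at_zeros (f : R -> R) a b :
  (forall x, a <= x <= b -> ex_derive f x) ->
  (forall x, a <= x <= b -> f x = 0 -> Derive f x < 0) ->
  0 < f b -> forall x, a <= x <= b -> 0 < f x.
Proof.
  intros Hdiff Hzeros Hb.
  assert (Hcont : forall x, a <= x <= b -> continuous f x)
    by (intros x Hx; exact (ex_derive_continuous f x (Hdiff x Hx))).
  apply real_induction_down; [exact Hb| |].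
  - intros t Ht Pt; destruct (continuous_pos_near f t (Hcont t ltac:(lra)) Pt) as [d [Hd Hnear]].
    exists d; split; [exact Hd|]; intros s Hs Hsd; apply Hnear, Rabs_def1; lra.
  - intros t Ht Habove.
    destruct (Rle_lt_or_eq_dec 0 (f t)) as [Hpos | Hzero];
      [exact (continuous_nonneg_right f t b (proj2 Ht) (Hcont t ltac:(lra)) Habove) | exact Hpos |].
    destruct (Derive_neg_right_lt f t (Hdiff t ltac:(lra)) (Hzeros t ltac:(lra) (eq_sym Hzero)))
      as [h0 [Hh0 Hdecr]].
    destruct (exists_right_near t b h0 (proj2 Ht) Hh0) as [y [Hy Hyh]].
    specialize (Hdecr (y - t) ltac:(lra)); replace (t + (y - t)) with y in Hdecr by ring.
    specialize (Habove y Hy); lra.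
Qed.

Lemma Derive_nonneg_le (g : R -> R) a b : a <= b ->
  (forall y, a <= y <= b -> ex_derive g y /\ 0 <= Derive g y) -> g a <= g b.
Proof.
  intros Hab Hg.
  destruct (MVT_gen g a b (Derive g)) as [c [Hc Hmvt]];
    rewrite ?Rmin_left, ?Rmax_right in * by lra.
  - intros x Hx; apply Derive_correct, Hg; lra.
  - intros x Hx; apply continuity_pt_filterlim.
    exact (ex_derive_continuous g x (proj1 (Hg x ltac:(lra)))).
  - destruct (Hg c Hc) as [_ Hd]; nra.
Qed.

Lemma Derive_nonpos_ge (g : R -> R) a b : a <= b ->
  (forall y, a <= y <= b -> ex_derive g y /\ Derive g y <= 0) -> g b <= g a.
Proof.
  intros Hab Hg.
  enough (- g a <= - g b) by lra.
  apply (Derive_nonneg_le (fun x => - g x) a b Hab); intros y Hy.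
  destruct (Hg y Hy) as [Hd Hneg]; split; [exact (ex_derive_opp g y Hd)|].
  rewrite Derive_opp; lra.
Qed.

Lemma iter_partial_app (l l' : list bool) (f : R -> R -> R) :
  iter_partial (l ++ l') f = iter_partial l (iter_partial l' f).
Proof. induction l as [|b l IH]; simpl; [reflexivity | now rewrite IH]. Qed.

Lemma smooth_on_du {V : pset} {f : R -> R -> R} : smooth_on V f -> smooth_on V (du f).
Proof.
  intros Hf l u v Huv; change (du f) with (iter_partial (true :: nil) f).
  rewrite <- iter_partial_app; exact (Hf _ u v Huv).
Qed.

Lemma smooth_on_dv {V : pset} {f : R -> R -> R} : smooth_on V f -> smooth_on V (dv f).
Proof.
  intros Hf l u v Huv; change (dv f) with (iter_partial (false :: nil) f).
  rewrite <- iter_partial_app; exact (Hf _ u v Huv).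
Qed.

Lemma smooth_on_ex_derive_u {V : pset} {f : R -> R -> R} {u v : R} :
  smooth_on V f -> V u v -> ex_derive (fun x => f x v) u.
Proof. intros Hf Huv; exact (proj1 (Hf nil u v Huv)). Qed.

Lemma smooth_on_ex_derive_v {V : pset} {f : R -> R -> R} {u v : R} :
  smooth_on V f -> V u v -> ex_derive (fun y => f u y) v.
Proof. intros Hf Huv; exact (proj1 (proj2 (Hf nil u v Huv))). Qed.

Lemma is_lub_approx (E : R -> Prop) s eps : is_lub E s -> 0 < eps -> exists x, E x /\ s - eps < x.
Proof.
  intros [_ Hleast] Heps; apply NNPP; intro Hnone.
  enough (s <= s - eps) by lra.
  apply Hleast; intros x Ex; apply Rnot_lt_le; intro Hx; apply Hnone; eauto.
Qed.

Lemma not_asymptotic_row v0 (S : pset) ustar :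
  ~ asymptotic_to_horizon v0 S -> 0 < ustar ->
  exists u, 0 < u < ustar /\ forall v, v0 < v -> ~ S u v.
Proof.
  intros Hnot Hustar; apply NNPP; intro Hnone; apply Hnot.
  exists ustar; split; [exact Hustar|]; intros u Hu; apply NNPP; intro Hrow.
  apply Hnone; exists u; split; [exact Hu|]; intros v Hv Suv; apply Hrow; eauto.
Qed.

Lemma du_hawking_mass_at_dv_zero (Om r : R -> R -> R) u v :
  ex_derive (fun x => r x v) u -> ex_derive (fun x => Om x v) u ->
  ex_derive (fun x => du r x v) u -> ex_derive (fun x => dv r x v) u ->
  Om u v <> 0 -> dv r u v = 0 ->
  du (hawking_mass Om r) u v
  = du r u v / 2 + 2 * r u v * / (Om u v ^ 2) * du r u v * du (dv r) u v.
Proof.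
  intros Dr DOm Dru Drv HOm Hzero; unfold du at 1, hawking_mass.
  apply is_derive_unique; auto_derive.
  - repeat split; auto; rewrite Rmult_1_r; now apply Rmult_integral_contrapositive_currified.
  - rewrite Hzero; unfold du; field; exact HOm.
Qed.

Section Regular_rectangle.

Variables (u0 v0 : R) (G V : pset) (Om r Tuu Tuv : R -> R -> R) (rplus delta : R).

Hypotheses
  (Hu0 : 0 < u0)
  (HGK : forall u v, G u v -> K u0 v0 u v)
  (HGopen : rel_open_K u0 v0 G)
  (HCout : forall v, v0 <= v -> G 0 v)
  (HGV : forall u v, G u v -> V u v)
  (SOm : smooth_on V Om) (Sr : smooth_on V r)
  (HOm : forall u v, G u v -> 0 < Om u v)
  (Hr0 : forall u v, G u v -> 0 <= r u v)
  (Hray_u : forall u v, G u v ->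
      du (fun a b => / (Om a b ^ 2) * du r a b) u v
        = - r u v * / (Om u v ^ 2) * Tuu u v)
  (Hm_u : forall u v, G u v ->
      du (hawking_mass Om r) u v
        = 2 * r u v ^ 2 * / (Om u v ^ 2) *
            (Tuv u v * du r u v - Tuu u v * dv r u v))
  (HTuu : forall u v, G u v -> 0 <= Tuu u v)
  (HII : forall pu pv, G pu pv -> forall u v, Jminus u0 v0 pu pv u v -> G u v)
  (HV : forall v, v0 <= v -> du r 0 v < 0)
  (HVI : forall v, v0 <= v -> dv r 0 v > 0)
  (HVII : forall pu pv qu qv,
      closureK u0 v0 (regR G r) pu pv ->
      closureK u0 v0 (regR G r) qu qv ->
      Iminus u0 v0 pu pv qu qv ->
      (forall u v, Jminus u0 v0 pu pv u v -> Jplus u0 v0 qu qv u v ->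
         ~ (u = pu /\ v = pv) -> regR G r u v \/ mttA G r u v) ->
      regR G r pu pv \/ mttA G r pu pv)
  (HA : forall u v, mttA G r u v -> Wset G r rplus delta u v ->
      Tuv u v * / (Om u v ^ 2) < / (4 * r u v ^ 2)).

Lemma G_near u v : G u v -> exists e, 0 < e /\
  forall u' v', Rabs (u' - u) < e -> Rabs (v' - v) < e -> K u0 v0 u' v' -> G u' v'.
Proof.
  destruct HGopen as [U [HUopen HUG]]; intros Guv.
  destruct (HUopen u v (proj1 (proj1 (HUG u v) Guv))) as [e [He Hball]].
  exists e; split; [exact He|]; intros u' v' Hu' Hv' Kuv'.
  apply HUG; split; [apply Hball|]; assumption.
Qed.

Lemma G_past u v x y : G u v -> 0 <= x <= u -> v0 <= y <= v -> G x y.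
Proof.
  intros Guv Hx Hy; destruct (HGK u v Guv) as [[_ Hu] _].
  apply (HII u v Guv); repeat split; lra.
Qed.

Lemma continuous_dv_r_u u v : G u v -> continuous (fun x => dv r x v) u.
Proof.
  intro Guv; exact (ex_derive_continuous _ _ (smooth_on_ex_derive_u (smooth_on_dv Sr) (HGV u v Guv))).
Qed.

Lemma continuous_dv_r_v u v : G u v -> continuous (fun y => dv r u y) v.
Proof.
  intro Guv; exact (ex_derive_continuous _ _ (smooth_on_ex_derive_v (smooth_on_dv Sr) (HGV u v Guv))).
Qed.

Lemma du_r_neg u v : G u v -> du r u v < 0.
Proof.
  intros Guv; destruct (HGK u v Guv) as [[Hu _] Hv].
  set (a x := / (Om x v ^ 2) * du r x v).
  assert (Hdecr : a u <= a 0).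
  { apply Derive_nonpos_ge; [lra|]; intros x Hx.
    assert (Gx : G x v) by (apply (G_past u v x v Guv); lra).
    assert (Ox := HOm x v Gx); split.
    - unfold a; auto_derive; repeat split.
      + exact (smooth_on_ex_derive_u SOm (HGV x v Gx)).
      + rewrite Rmult_1_r; apply Rmult_integral_contrapositive_currified; lra.
      + exact (smooth_on_ex_derive_u (smooth_on_du Sr) (HGV x v Gx)).
    - change (du (fun a b => / (Om a b ^ 2) * du r a b) x v <= 0); rewrite (Hray_u x v Gx).
      assert (0 < / (Om x v ^ 2)) by (apply Rinv_0_lt_compat; nra).
      assert (0 <= r x v * / (Om x v ^ 2) * Tuu x v)
        by (apply Rmult_le_pos; [apply Rmult_le_pos|]; auto; lra).
      lra. }
  assert (Hstart : a 0 < 0).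
  { assert (O0 := HOm 0 v (HCout v Hv)).
    assert (0 < / (Om 0 v ^ 2)) by (apply Rinv_0_lt_compat; nra).
    unfold a; specialize (HV v Hv); nra. }
  assert (0 < / (Om u v ^ 2)) by (assert (Ou := HOm u v Guv); apply Rinv_0_lt_compat; nra).
  unfold a in *; nra.
Qed.

Lemma du_dv_r_neg_on_A u v : G u v -> dv r u v = 0 -> rplus - delta <= r u v ->
  du (dv r) u v < 0.
Proof.
  intros Guv Hzero HW.
  assert (Hcond := HA u v (conj Guv (conj Hzero (du_r_neg u v Guv))) (conj Guv (Rle_ge _ _ HW))).
  assert (Hmass := Hm_u u v Guv).
  assert (HVuv := HGV u v Guv).
  rewrite (du_hawking_mass_at_dv_zero Om r u v
    (smooth_on_ex_derive_u Sr HVuv) (smooth_on_ex_derive_u SOm HVuv)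
    (smooth_on_ex_derive_u (smooth_on_du Sr) HVuv) (smooth_on_ex_derive_u (smooth_on_dv Sr) HVuv)
    (Rgt_not_eq _ _ (HOm u v Guv)) Hzero), Hzero in Hmass.
  assert (Hru := du_r_neg u v Guv); assert (Hr := Hr0 u v Guv); assert (HO := HOm u v Guv).
  set (io := / (Om u v ^ 2)) in *; set (D := du (dv r) u v) in *.
  assert (Hio : 0 < io) by (apply Rinv_0_lt_compat; nra).
  assert (Hbal : / 2 + 2 * r u v * io * D - 2 * r u v ^ 2 * io * Tuv u v = 0).
  { apply (Rmult_eq_reg_l (du r u v)); [|lra].
    rewrite Rmult_0_r; rewrite Rmult_0_r in Hmass; nra. }
  assert (Hrpos : 0 < r u v) by (destruct Hr as [|Hr]; [assumption|rewrite <- Hr in Hbal; lra]).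
  assert (Hsmall : 4 * r u v ^ 2 * (Tuv u v * io) < 1).
  { apply Rmult_lt_compat_l with (r := 4 * r u v ^ 2) in Hcond; [|nra].
    rewrite Rinv_r in Hcond by nra; exact Hcond. }
  assert (Hprod : r u v * io * D < 0) by nra.
  assert (0 < r u v * io) by (apply Rmult_lt_0_compat; assumption).
  nra.
Qed.

Section Column.

Variables u1 v1 : R.

Hypotheses
  (Hu1 : 0 < u1 <= u0) (Hv1 : v0 <= v1)
  (Hstart : G u1 v1 /\ 0 < dv r u1 v1) (HWstart : rplus - delta <= r u1 v1)
  (Hno_A : forall v, v0 < v -> ~ mttA G r u1 v).

Lemma row_regular s : v1 <= s ->
  (forall y, v1 <= y <= s -> G u1 y /\ 0 < dv r u1 y) ->
  forall u, 0 <= u <= u1 -> Wset G r rplus delta u s /\ regR G r u s.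
Proof.
  intros Hs Hcol u Hu.
  destruct (Hcol s ltac:(lra)) as [Gs Hdvs].
  assert (Grow : forall x, 0 <= x <= u1 -> G x s) by (intros x Hx; apply (G_past u1 s x s Gs); lra).
  assert (Hr_col : r u1 v1 <= r u1 s).
  { apply (Derive_nonneg_le (fun y => r u1 y)); [lra|]; intros y Hy.
    destruct (Hcol y Hy) as [Gy Hdvy].
    split; [exact (smooth_on_ex_derive_v Sr (HGV u1 y Gy))|]; change (0 <= dv r u1 y); lra. }
  assert (HW : forall x, 0 <= x <= u1 -> rplus - delta <= r x s).
  { intros x Hx; enough (r u1 s <= r x s) by lra.
    apply (Derive_nonpos_ge (fun x => r x s)); [lra|]; intros y Hy.
    split; [exact (smooth_on_ex_derive_u Sr (HGV y s (Grow y ltac:(lra))))|].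
    change (du r y s <= 0); left; apply du_r_neg, Grow; lra. }
  assert (Hdv : 0 < dv r u s).
  { apply (pos_of_Derive_neg_at_zeros (fun x => dv r x s) 0 u1); [| |exact Hdvs|exact Hu].
    - intros x Hx; exact (smooth_on_ex_derive_u (smooth_on_dv Sr) (HGV x s (Grow x Hx))).
    - intros x Hx Hzero; exact (du_dv_r_neg_on_A x s (Grow x Hx) Hzero (HW x Hx)). }
  split; [split; [apply Grow, Hu | apply Rle_ge, HW, Hu]|].
  repeat split; [apply Grow, Hu | exact Hdv | apply du_r_neg, Grow, Hu].
Qed.

Lemma row_in_G t : v1 < t -> (forall y, v1 <= y < t -> G u1 y /\ 0 < dv r u1 y) ->
  forall u, 0 <= u <= u1 -> G u t.
Proof.
  intros Ht Hcol.
  assert (Hreg : forall y, v1 <= y < t -> forall u, 0 <= u <= u1 -> regR G r u y)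
    by (intros y Hy u Hu; refine (proj2 (row_regular y _ _ u Hu)); [lra | intros; apply Hcol; lra]).
  apply real_induction; [apply HCout; lra| |].
  - intros s Hs Gs; destruct (G_near s t Gs) as [e [He Hnear]].
    exists e; split; [exact He|]; intros s' Hs' Hs'e.
    apply Hnear; [apply Rabs_def1; lra | rewrite Rminus_diag, Rabs_R0; exact He | split; lra].
  - intros s Hs Gleft.
    assert (Hdv_t : forall u, 0 <= u < s -> 0 <= dv r u t).
    { intros u Hu; apply (continuous_nonneg_left (fun y => dv r u y) v1 t Ht).
      - exact (continuous_dv_r_v u t (Gleft u Hu)).
      - intros y Hy; apply Hreg; lra. }
    destruct (HVII s t 0 v1) as [[Gp _] | [Gp _]]; try exact Gp.
    + split; [split; lra|]; intros eps Heps.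
      destruct (exists_left_near v1 t eps Ht Heps) as [y [Hy Hyt]].
      exists s, y; split; [apply Hreg; lra|].
      rewrite Rminus_diag, Rabs_R0; split; [exact Heps | apply Rabs_def1; lra].
    + split; [split; lra|]; intros eps Heps; exists 0, v1.
      rewrite !Rminus_diag, Rabs_R0; repeat split; auto with real; apply HCout; lra.
    + repeat split; lra.
    + intros u v [[Hu Hv] [Hus Hvt]] [_ [Hu0' Hvv1]] Hne.
      destruct (Rlt_or_le v t) as [Hvt' | Htv]; [left; apply Hreg; lra|].
      replace v with t in * by lra.
      assert (Hus' : u < s) by (destruct (Rle_lt_or_eq_dec u s Hus); [assumption | tauto]).
      assert (Gu := Gleft u ltac:(lra)); assert (Hur := du_r_neg u t Gu).
      destruct (Rle_lt_or_eq_dec 0 (dv r u t) (Hdv_t u ltac:(lra))) as [Hpos | Hzero];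
        [left | right]; repeat split; auto.
Qed.

Lemma column_regular t : v1 <= t -> G u1 t /\ 0 < dv r u1 t.
Proof.
  intros Ht; apply (real_induction (fun y => G u1 y /\ 0 < dv r u1 y) v1 t); [exact Hstart| | |lra].
  - intros y Hy [Gy Hdvy].
    destruct (G_near u1 y Gy) as [e1 [He1 Hnear]].
    destruct (continuous_pos_near _ y (continuous_dv_r_v u1 y Gy) Hdvy) as [e2 [He2 Hpos]].
    exists (Rmin e1 e2); split; [now apply Rmin_glb_lt|]; intros s Hs Hse.
    assert (Hds : Rabs (s - y) < Rmin e1 e2) by (apply Rabs_def1; lra).
    split; [apply Hnear; [rewrite Rminus_diag, Rabs_R0 | |]|].
    + exact He1.
    + exact (Rlt_le_trans _ _ _ Hds (Rmin_l _ _)).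
    + split; lra.
    + exact (Hpos s (Rlt_le_trans _ _ _ Hds (Rmin_r _ _))).
  - intros y Hy Hbelow.
    assert (Gy : G u1 y) by (apply (row_in_G y); lra || (intros; apply Hbelow; lra)).
    split; [exact Gy|].
    destruct (Rle_lt_or_eq_dec 0 (dv r u1 y)) as [Hpos | Hzero]; [| exact Hpos |].
    + apply (continuous_nonneg_left _ v1 y (proj1 Hy) (continuous_dv_r_v u1 y Gy)).
      intros; apply Hbelow; lra.
    + exfalso; apply (Hno_A y); [lra|]; repeat split; auto using du_r_neg.
Qed.

Lemma rectangle_regular u v : K u1 v1 u v -> Wset G r rplus delta u v /\ regR G r u v.
Proof.
  intros [Hu Hv]; apply (row_regular v Hv); [|exact Hu].
  intros y Hy; apply column_regular; lra.
Qed.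

End Column.

Lemma ingoing_start v1 : v0 <= v1 -> rplus - delta < r 0 v1 ->
  exists ustar, 0 < ustar <= u0 /\ forall u, 0 <= u < ustar ->
    (G u v1 /\ 0 < dv r u v1) /\ rplus - delta <= r u v1.
Proof.
  intros Hv1 Hr1; assert (G01 := HCout v1 Hv1).
  destruct (G_near 0 v1 G01) as [e1 [He1 Hnear]].
  destruct (continuous_pos_near _ 0 (continuous_dv_r_u 0 v1 G01) (HVI v1 Hv1)) as [e2 [He2 Hdv]].
  destruct (continuous_eps_delta (fun x => r x v1) 0
    (ex_derive_continuous _ _ (smooth_on_ex_derive_u Sr (HGV 0 v1 G01)))
    (r 0 v1 - (rplus - delta)) ltac:(lra)) as [e3 [He3 Hr]].
  set (ustar := Rmin (Rmin e1 e2) (Rmin e3 u0)).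
  assert (Hbounds : ustar <= e1 /\ ustar <= e2 /\ ustar <= e3 /\ ustar <= u0).
  { pose proof (Rmin_l (Rmin e1 e2) (Rmin e3 u0)); pose proof (Rmin_r (Rmin e1 e2) (Rmin e3 u0)).
    pose proof (Rmin_l e1 e2); pose proof (Rmin_r e1 e2); pose proof (Rmin_l e3 u0); pose proof (Rmin_r e3 u0).
    unfold ustar; lra. }
  exists ustar; split; [split; [repeat apply Rmin_glb_lt; lra | tauto]|].
  intros u Hu; assert (Hdu : Rabs (u - 0) < ustar) by (apply Rabs_def1; lra).
  repeat split.
  - apply Hnear; [lra | rewrite Rminus_diag, Rabs_R0; exact He1 | split; lra].
  - apply Hdv; lra.
  - specialize (Hr u ltac:(lra)); apply Rabs_def2 in Hr; lra.
Qed.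

Lemma regular_rectangle :
  is_lub (fun x => exists v, v0 <= v /\ x = r 0 v) rplus -> 0 < delta ->
  ~ asymptotic_to_horizon v0 (mttA G r) ->
  exists u1 v1, 0 < u1 <= u0 /\ v0 <= v1 /\
    forall u v, K u1 v1 u v -> Wset G r rplus delta u v /\ regR G r u v.
Proof.
  intros Hrplus Hdelta Hnoasym.
  destruct (is_lub_approx _ _ _ Hrplus Hdelta) as [x [[v1 [Hv1 ->]] Hr1]].
  destruct (ingoing_start v1 Hv1 Hr1) as [ustar [Hustar Hsegment]].
  destruct (not_asymptotic_row v0 (mttA G r) ustar Hnoasym (proj1 Hustar)) as [u1 [Hu1 Hno_A]].
  destruct (Hsegment u1 ltac:(lra)) as [Hstart HWstart].
  exists u1, v1; split; [lra|]; split; [exact Hv1|].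
  exact (rectangle_regular u1 v1 ltac:(lra) Hv1 Hstart HWstart Hno_A).
Qed.

End Regular_rectangle.

Theorem proposition4
  (u0 v0 : R) (Hu0 : 0 < u0) (Hv0 : 0 < v0)
  (G : R -> R -> Prop) (Om r Tuu Tuv Tvv : R -> R -> R)
  (* G(u0,v0): globally hyperbolic, relatively open in K(u0,v0),
     containing C_in and C_out *)
  (HGK : forall u v, G u v -> K u0 v0 u v)
  (HGopen : rel_open_K u0 v0 G)
  (HGgh : glob_hyp u0 v0 G)
  (HCin : forall u, 0 <= u <= u0 -> G u v0)
  (HCout : forall v, v0 <= v -> G 0 v)
  (* smoothness *)
  (Hsmooth : exists V, open2 V /\ (forall u v, G u v -> V u v) /\
      smooth_on V Om /\ smooth_on V r /\ smooth_on V Tuu /\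
      smooth_on V Tuv /\ smooth_on V Tvv)
  (HOm : forall u v, G u v -> 0 < Om u v)
  (Hr0 : forall u v, G u v -> 0 <= r u v)
  (HrCin : forall u, 0 <= u <= u0 -> 0 < r u v0)
  (HrCout : forall v, v0 <= v -> 0 < r 0 v)
  (* Einstein equations (Raychaudhuri and mass equations) *)
  (Hray_u : forall u v, G u v ->
      du (fun a b => / (Om a b ^ 2) * du r a b) u v
        = - r u v * / (Om u v ^ 2) * Tuu u v)
  (Hray_v : forall u v, G u v ->
      dv (fun a b => / (Om a b ^ 2) * dv r a b) u v
        = - r u v * / (Om u v ^ 2) * Tvv u v)
  (Hm_u : forall u v, G u v ->
      du (hawking_mass Om r) u v
        = 2 * r u v ^ 2 * / (Om u v ^ 2) *
            (Tuv u v * du r u v - Tuu u v * dv r u v))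
  (Hm_v : forall u v, G u v ->
      dv (hawking_mass Om r) u v
        = 2 * r u v ^ 2 * / (Om u v ^ 2) *
            (Tuv u v * dv r u v - Tvv u v * du r u v))
  (rplus mplus : R)
  (* (III): r_+ = sup_{C_out} r is finite *)
  (Hrplus : is_lub (fun x => exists v, v0 <= v /\ x = r 0 v) rplus)
  (* (IV): 0 <= m along C_out and m_+ = sup_{C_out} m is finite *)
  (Hmplus : is_lub (fun x => exists v, v0 <= v /\ x = hawking_mass Om r 0 v) mplus)
  (Hm0 : forall v, v0 <= v -> 0 <= hawking_mass Om r 0 v)
  (* (I) *)
  (HT : forall u v, G u v -> 0 <= Tuu u v /\ 0 <= Tuv u v /\ 0 <= Tvv u v)
  (* (II) *)
  (HII : forall pu pv, G pu pv -> forall u v, Jminus u0 v0 pu pv u v -> G u v)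
  (* (V), (VI) *)
  (HV : forall v, v0 <= v -> du r 0 v < 0)
  (HVI : forall v, v0 <= v -> dv r 0 v > 0)
  (* (VII) *)
  (HVII : forall pu pv qu qv,
      closureK u0 v0 (regR G r) pu pv ->
      closureK u0 v0 (regR G r) qu qv ->
      Iminus u0 v0 pu pv qu qv ->
      (forall u v, Jminus u0 v0 pu pv u v -> Jplus u0 v0 qu qv u v ->
         ~ (u = pu /\ v = pv) -> regR G r u v \/ mttA G r u v) ->
      regR G r pu pv \/ mttA G r pu pv)
  (* condition (A) on A \cap W(delta) *)
  (delta : R) (Hdelta : 0 < delta)
  (HA : forall u v, mttA G r u v -> Wset G r rplus delta u v ->
      Tuv u v * / (Om u v ^ 2) < / (4 * r u v ^ 2))
  (* no marginally trapped tube asymptotic to the event horizon *)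
  (Hnoasym : ~ asymptotic_to_horizon v0 (mttA G r)) :
  exists u1 v1, 0 < u1 <= u0 /\ v0 <= v1 /\
    forall u v, K u1 v1 u v -> Wset G r rplus delta u v /\ regR G r u v.
Proof.
  destruct Hsmooth as [V [_ [HGV [SOm [Sr _]]]]].
  exact (regular_rectangle u0 v0 G V Om r Tuu Tuv rplus delta Hu0 HGK HGopen HCout HGV SOm Sr
    HOm Hr0 Hray_u Hm_u (fun u v Guv => proj1 (HT u v Guv)) HII HV HVI HVII HA
    Hrplus Hdelta Hnoasym).
Qed.
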